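(* Let $p(z)=z^n+a_nz^{n-1}+\cdots+a_2z+a_1$ be a complex monic polynomial with $n\geq2$ and $a_1\neq0$. If $z\in\mathbb{C}$ is any zero of $p$, then $$|z|\leq\left\{\frac{1}{2}\left(\delta_1+\delta+\sqrt{(\delta_1-\delta)^2+4\delta_2}\right)+1\right\}^{1/8}.$$
   Context: Let $C_p$ be the $n\times n$ matrix whose first row is $(-a_n,-a_{n-1},\dots,-a_2,-a_1)$, whose entries $(k+1,k)$ equal $1$ for $k=1,\dots,n-1$, and whose other entries are $0$. Define numbers $b_j,c_j,d_j$ ($j=1,\dots,n$) by: the first row of $C_p^2$ is $(b_n,b_{n-1},\dots,b_1)$, the first row of $C_p^3$ is $(c_n,\dots,c_1)$, the first row of $C_p^4$ is $(d_n,\dots,d_1)$ (so $b_j=a_na_j-a_{j-1}$, $c_j=-a_nb_j+a_{n-1}a_j-a_{j-2}$ with $a_0=a_{-1}=0$). Set $\alpha=\sum_{j=1}^n|a_j|^2$, $\beta=\sum_{j=1}^n|b_j|^2$, $\gamma=-\sum_{j=1}^n b_j\overline{a_j}$, $\delta=\frac{1}{2}\left(\alpha+\beta+\sqrt{(\alpha-\beta)^2+4|\gamma|^2}\right)$; $\alpha_1=\sum_{j=1}^n|d_j|^2$, $\beta_1=\sum_{j=1}^n|c_j|^2$, $\gamma_1=\sum_{j=1}^n d_j\overline{c_j}$, $\delta_1=\frac12\left(\alpha_1+\beta_1+\sqrt{(\alpha_1-\beta_1)^2+4|\gamma_1|^2}\right)$; $\gamma_2=\sum_{j=1}^n d_j\overline{b_j}$,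 $\gamma_3=\sum_{j=1}^n d_j\overline{a_j}$, $\gamma_4=\sum_{j=1}^n c_j\overline{b_j}$, $\gamma_5=\sum_{j=1}^n c_j\overline{a_j}$, and $\delta_2=\frac12\Big(|\gamma_2|^2+|\gamma_3|^2+|\gamma_4|^2+|\gamma_5|^2+\sqrt{\big((|\gamma_2|^2+|\gamma_3|^2)-(|\gamma_4|^2+|\gamma_5|^2)\big)^2+4|\gamma_2\overline{\gamma_4}+\gamma_3\overline{\gamma_5}|^2}\Big)$. *)

(* complex numbers modelled by an arbitrary numClosedFieldType C
   (e.g. complex R for R : realType, or algC). *)
From HB Require Import structures.
From mathcomp Require Import all_boot all_order all_algebra.
Set Implicit Arguments. Unset Strict Implicit. Unset Printing Implicit Defensive.
Import Order.TTheory GRing.Theory Num.Theory.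
Local Open Scope ring_scope.

Section Defs.
Variable C : numClosedFieldType.

Definition ent n (M : 'M[C]_n) (i j : nat) : C :=
  match @insub nat (fun k => k < n)%N 'I_n i, @insub nat (fun k => k < n)%N 'I_n j with
  | Some i', Some j' => M i' j'
  | _, _ => 0
  end.

(* Companion matrix C_p: first row (-a_n, ..., -a_1), entries (k+1,k) = 1,
   all other entries 0 (0-indexed here). *)
Definition companion (n : nat) (a : nat -> C) : 'M[C]_n :=
  \matrix_(i < n, k < n)
    (if i == 0%N :> nat then - a (n - k)%N
     else if i == k.+1 :> nat then 1 else 0).

(* b_j, c_j, d_j : the first row of C_p^2, C_p^3, C_p^4 is (x_n, ..., x_1),
   i.e. x_j sits in column n - j (0-indexed). *)
Definition bcoef n (a : nat -> C) (j : nat) : C := ent (companion n a ^+ 2) 0 (n - j).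
Definition ccoef n (a : nat -> C) (j : nat) : C := ent (companion n a ^+ 3) 0 (n - j).
Definition dcoef n (a : nat -> C) (j : nat) : C := ent (companion n a ^+ 4) 0 (n - j).

Definition sumj n (f : nat -> C) : C := \sum_(1 <= j < n.+1) f j.

Definition alpha n (a : nat -> C) : C := sumj n (fun j => `|a j| ^+ 2).
Definition beta n (a : nat -> C) : C := sumj n (fun j => `|bcoef n a j| ^+ 2).
Definition gamma n (a : nat -> C) : C := - sumj n (fun j => bcoef n a j * (a j)^*).
Definition delta n (a : nat -> C) : C :=
  (alpha n a + beta n a
   + sqrtC ((alpha n a - beta n a) ^+ 2 + 4 * `|gamma n a| ^+ 2)) / 2.

Definition alpha1 n (a : nat -> C) : C := sumj n (fun j => `|dcoef n a j| ^+ 2).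
Definition beta1 n (a : nat -> C) : C := sumj n (fun j => `|ccoef n a j| ^+ 2).
Definition gamma1 n (a : nat -> C) : C := sumj n (fun j => dcoef n a j * (ccoef n a j)^*).
Definition delta1 n (a : nat -> C) : C :=
  (alpha1 n a + beta1 n a
   + sqrtC ((alpha1 n a - beta1 n a) ^+ 2 + 4 * `|gamma1 n a| ^+ 2)) / 2.

Definition gamma2 n (a : nat -> C) : C := sumj n (fun j => dcoef n a j * (bcoef n a j)^*).
Definition gamma3 n (a : nat -> C) : C := sumj n (fun j => dcoef n a j * (a j)^*).
Definition gamma4 n (a : nat -> C) : C := sumj n (fun j => ccoef n a j * (bcoef n a j)^*).
Definition gamma5 n (a : nat -> C) : C := sumj n (fun j => ccoef n a j * (a j)^*).
Definition delta2 n (a : nat -> C) : C :=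
  let g2 := `|gamma2 n a| ^+ 2 in let g3 := `|gamma3 n a| ^+ 2 in
  let g4 := `|gamma4 n a| ^+ 2 in let g5 := `|gamma5 n a| ^+ 2 in
  (g2 + g3 + g4 + g5
   + sqrtC (((g2 + g3) - (g4 + g5)) ^+ 2
            + 4 * `|gamma2 n a * (gamma4 n a)^* + gamma3 n a * (gamma5 n a)^*| ^+ 2)) / 2.

Definition peval n (a : nat -> C) (z : C) : C :=
  z ^+ n + \sum_(1 <= k < n.+1) a k * z ^+ k.-1.

End Defs.

(* If p(z) = 0 then x = (z^(n-1), ..., z, 1)^T satisfies C_p x = z x, so the
   first row (r_n, ..., r_1) of C_p^m satisfies sum_j r_j z^(j-1) = z^(m+n-1).
   Pairing V = conj(z^(n+3)) d + conj(z^(n+2)) c + conj(z^(n+1)) b - conj(z^n) a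
   (a, b, c, d the first rows of -C_p, C_p^2, C_p^3, C_p^4) with (z^(j-1))_j
   therefore gives S = |z|^(2n) + ... + |z|^(2n+6).  The numbers delta, delta1,
   delta2 are larger eigenvalues lam p r q of 2 x 2 Hermitian Gram-type matrices
   and bound squared norms of linear combinations, giving |V|^2 <= L S with L the
   combination in the theorem.  Cauchy-Schwarz yields S^2 <= L S N, N = 1 + |z|^2
   + ... + |z|^(2n-2), so S <= L N; as |z|^8 N <= N + S, we get |z|^8 <= L + 1. *)

From HB Require Import structures.
From mathcomp Require Import all_boot all_order all_algebra.
From mathcomp Require Import ring zify.
Import Order.TTheory GRing.Theory Num.Theory.
Local Open Scope ring_scope.

Section HermitianForm.
Context {C : numClosedFieldType}.
Implicit Types p q r x y w : C.

(* The larger eigenvalue of the Hermitian matrix [[p, q], [q^*, r]]. *)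
Definition lam p r q : C := (p + r + sqrtC ((p - r) ^+ 2 + 4 * `|q| ^+ 2)) / 2.

Lemma normsq_ge0 x : 0 <= `|x| ^+ 2.
Proof. by rewrite exprn_ge0. Qed.

Lemma real_sqr_ge0 x : x \is Num.real -> 0 <= x ^+ 2.
Proof. by move=> xR; rewrite real_exprn_even_ge0. Qed.

Lemma addC_conj_le w : w + w^* <= 2 * `|w|.
Proof.
have -> : w + w^* = 2 * 'Re w by rewrite ReE mulrC divfK ?pnatr_eq0.
by rewrite ler_wpM2l ?ler0n // (leif_Re_Creal w).1.
Qed.

Lemma lamC p r q q' : `|q| = `|q'| -> lam p r q = lam r p q'.
Proof. by move=> eq_q; rewrite /lam eq_q [p + r]addrC -[r - p]opprB sqrrN. Qed.

Lemma lam_char p r q : 0 <= p -> 0 <= r ->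
  [/\ 0 <= lam p r q - p, 0 <= lam p r q - r &
      (lam p r q - p) * (lam p r q - r) = `|q| ^+ 2].
Proof.
move=> p0 r0.
have prR : p - r \is Num.real by rewrite rpredB ?ger0_real.
set D := (p - r) ^+ 2 + 4 * `|q| ^+ 2.
have D0 : 0 <= D by rewrite addr_ge0 ?real_sqr_ge0 // mulr_ge0 ?normsq_ge0.
have s2 : sqrtC D ^+ 2 = D by rewrite sqrtCK.
have hs : `|p - r| <= sqrtC D.
  rewrite -(ler_pXn2r (_ : 0 < 2)%N) ?nnegrE ?sqrtC_ge0 //.
  by rewrite s2 real_normK // lerDl mulr_ge0 ?normsq_ge0.
rewrite /lam -/D; move: (sqrtC D) s2 hs => s s2 hs.
have -> : (p + r + s) / 2 - p = (s - (p - r)) / 2 by field.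
have -> : (p + r + s) / 2 - r = (s - (r - p)) / 2 by field.
split.
- by rewrite divr_ge0 ?ler0n // subr_ge0 (le_trans (real_ler_norm _) hs).
- rewrite divr_ge0 ?ler0n // subr_ge0 (le_trans (real_ler_norm _)) //.
    by rewrite -opprB rpredN.
  by rewrite distrC.
- have -> : (s - (p - r)) / 2 * ((s - (r - p)) / 2) = (s ^+ 2 - (p - r) ^+ 2) / 4
    by field.
  by rewrite s2 /D; field.
Qed.

Lemma lam_ge p r q : 0 <= p -> 0 <= r -> p <= lam p r q.
Proof. by move=> p0 r0; have [+ _ _] := lam_char _ _ q p0 r0; rewrite subr_ge0. Qed.

Lemma lam_ge0 p r q : 0 <= p -> 0 <= r -> 0 <= lam p r q.
Proof. by move=> p0 r0; exact: le_trans p0 (lam_ge _ _ q p0 r0). Qed.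

Lemma hermitian2_le p r q x y : 0 <= p -> 0 <= r ->
  p * `|x| ^+ 2 + r * `|y| ^+ 2 + (q * x * y^* + (q * x * y^*)^*)
    <= lam p r q * (`|x| ^+ 2 + `|y| ^+ 2).
Proof.
move=> p0 r0; have [A0 B0 AB] := lam_char _ _ q p0 r0.
set A := lam p r q - p in A0 AB *; set B := lam p r q - r in B0 AB *.
rewrite -subr_ge0.
have -> : lam p r q * (`|x| ^+ 2 + `|y| ^+ 2) -
   (p * `|x| ^+ 2 + r * `|y| ^+ 2 + (q * x * y^* + (q * x * y^*)^*))
   = (A * `|x| ^+ 2 + B * `|y| ^+ 2 - 2 * (`|q| * `|x| * `|y|))
     + (2 * `|q * x * y^*| - (q * x * y^* + (q * x * y^*)^*)).
  by rewrite !normrM norm_conjC /A /B; ring.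
apply: addr_ge0; last by rewrite subr_ge0 addC_conj_le.
have [A_eq0|A_neq0] := eqVneq A 0.
  have -> : `|q| = 0.
    by apply/eqP; rewrite -[_ == 0](expf_eq0 _ 2) -AB A_eq0 mul0r.
  by rewrite A_eq0 !mul0r mulr0 subr0 add0r mulr_ge0 ?normsq_ge0.
have A_gt0 : 0 < A by rewrite lt_def A_neq0 A0.
rewrite -(pmulr_rge0 _ A_gt0).
have -> : A * (A * `|x| ^+ 2 + B * `|y| ^+ 2 - 2 * (`|q| * `|x| * `|y|))
   = (A * `|x| - `|q| * `|y|) ^+ 2.
  have e : A * (B * `|y| ^+ 2) = `|q| ^+ 2 * `|y| ^+ 2 by rewrite mulrA AB.
  by rewrite mulrBr mulrDr e; ring.
by apply: real_sqr_ge0; rewrite rpredB ?rpredM ?ger0_real ?normr_ge0 ?ltW.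
Qed.

Lemma cauchy_schwarz2 (e1 e2 u v : C) :
  `|e1 * u + e2 * v| ^+ 2 <= (`|e1| ^+ 2 + `|e2| ^+ 2) * (`|u| ^+ 2 + `|v| ^+ 2).
Proof.
rewrite -subr_ge0.
have -> : (`|e1| ^+ 2 + `|e2| ^+ 2) * (`|u| ^+ 2 + `|v| ^+ 2) - `|e1 * u + e2 * v| ^+ 2
   = `|e1^* * v - e2^* * u| ^+ 2.
  by rewrite !normCK !rmorphB !rmorphD !rmorphM /= !conjCK; ring.
exact: normsq_ge0.
Qed.

End HermitianForm.

Section Gram.
Context {C : numClosedFieldType} (n : nat).
Implicit Types (u v : nat -> C) (x y : C).

Definition inner u v : C := sumj n (fun j => u j * (v j)^*).
Definition sqnorm u : C := sumj n (fun j => `|u j| ^+ 2).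

Lemma sqnormE u : sqnorm u = inner u u.
Proof. by apply: eq_bigr => j _; rewrite normCK. Qed.

Lemma sqnorm_ge0 u : 0 <= sqnorm u.
Proof. by apply: sumr_ge0 => j _; apply: normsq_ge0. Qed.

Lemma inner_conj u v : inner v u = (inner u v)^*.
Proof.
rewrite /inner /sumj rmorph_sum; apply: eq_bigr => j _.
by rewrite rmorphM /= conjCK mulrC.
Qed.

Lemma inner_comb x y x' y' u v u' v' :
  inner (fun j => x * u j + y * v j) (fun j => x' * u' j + y' * v' j) =
  x * x'^* * inner u u' + x * y'^* * inner u v' + y * x'^* * inner v u'
  + y * y'^* * inner v v'.
Proof.
rewrite /inner /sumj !mulr_sumr -!big_split; apply: eq_bigr => j _ /=.
by rewrite !rmorphD !rmorphM; ring.
Qed.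

Lemma sqnorm_comb x y u v :
  sqnorm (fun j => x * u j + y * v j) =
  sqnorm u * `|x| ^+ 2 + sqnorm v * `|y| ^+ 2
  + (inner u v * x * y^* + (inner u v * x * y^*)^*).
Proof.
rewrite sqnormE inner_comb -!sqnormE (inner_conj u v) !normCK !rmorphM /= conjCK.
by ring.
Qed.

Lemma gram2_le x y u v :
  sqnorm (fun j => x * u j + y * v j)
    <= lam (sqnorm u) (sqnorm v) (inner u v) * (`|x| ^+ 2 + `|y| ^+ 2).
Proof. by rewrite sqnorm_comb hermitian2_le ?sqnorm_ge0. Qed.

Lemma cauchy_schwarz u v : `|inner u v| ^+ 2 <= sqnorm u * sqnorm v.
Proof.
have [v0|v_neq0] := eqVneq (sqnorm v) 0.
  suff -> : inner u v = 0 by rewrite v0 normr0 expr0n /= mulr0.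
  move/eqP: v0; rewrite /sqnorm /sumj psumr_eq0 => [/allP v0|j _]; last first.
    exact: normsq_ge0.
  rewrite /inner /sumj big_seq big1 // => j /v0 /=.
  by rewrite expf_eq0 normr_eq0 => /eqP ->; rewrite conjC0 mulr0.
have v_gt0 : 0 < sqnorm v by rewrite lt_def v_neq0 sqnorm_ge0.
rewrite -(ler_pM2l v_gt0) -subr_ge0.
suff -> : sqnorm v * (sqnorm u * sqnorm v) - sqnorm v * `|inner u v| ^+ 2
  = sqnorm (fun j => sqnorm v * u j + (- inner u v) * v j) by apply: sqnorm_ge0.
rewrite sqnorm_comb normrN (ger0_norm (sqnorm_ge0 v)) normCK !rmorphM !rmorphN /=.
by rewrite !conjCK (geC0_conj (sqnorm_ge0 v)); ring.
Qed.

Lemma sqnorm_add u v :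
  sqnorm (fun j => u j + v j) = sqnorm u + sqnorm v + (inner u v + (inner u v)^*).
Proof.
transitivity (sqnorm (fun j => 1 * u j + 1 * v j)).
  by apply: eq_bigr => j _; rewrite !mul1r.
by rewrite sqnorm_comb normr1 expr1n conjC1 !mulr1.
Qed.

Lemma sqnorm_add_le u v (p r s X Y : C) : 0 <= p -> 0 <= r -> 0 <= s -> 0 <= X -> 0 <= Y ->
  sqnorm u <= p * X ^+ 2 -> sqnorm v <= r * Y ^+ 2 -> `|inner u v| <= s * X * Y ->
  sqnorm (fun j => u j + v j) <= lam p r s * (X ^+ 2 + Y ^+ 2).
Proof.
move=> p0 r0 s0 X0 Y0 hu hv huv.
have sXY0 : 0 <= s * X * Y by rewrite !mulr_ge0.
have := hermitian2_le p r s X Y p0 r0.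
rewrite !ger0_norm // (geC0_conj Y0) (geC0_conj sXY0); apply: le_trans.
rewrite sqnorm_add; apply: lerD; first exact: lerD.
apply: le_trans (addC_conj_le _) _.
by rewrite mulr2n mulrDl mul1r lerD.
Qed.

(* The cross inner product of two 2-term combinations is controlled by the
   larger eigenvalue of M M^*, M being the 2 x 2 matrix of mixed inner products. *)
Lemma cross_inner_le d c b a wd wc wb wa :
  `|inner (fun j => wd * d j + wc * c j) (fun j => wb * b j + wa * a j)| ^+ 2 <=
  lam (`|inner d b| ^+ 2 + `|inner d a| ^+ 2) (`|inner c b| ^+ 2 + `|inner c a| ^+ 2)
      (inner d b * (inner c b)^* + inner d a * (inner c a)^*)
  * (`|wd| ^+ 2 + `|wc| ^+ 2) * (`|wb| ^+ 2 + `|wa| ^+ 2).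
Proof.
rewrite inner_comb.
have -> : wd * wb^* * inner d b + wd * wa^* * inner d a + wc * wb^* * inner c b
          + wc * wa^* * inner c a
  = (wd * inner d b + wc * inner c b) * wb^* + (wd * inner d a + wc * inner c a) * wa^*.
  by ring.
apply: le_trans (cauchy_schwarz2 _ _ _ _) _.
rewrite !norm_conjC ler_wpM2r ?addr_ge0 ?normsq_ge0 //.
set G := inner d b * (inner c b)^* + inner d a * (inner c a)^*.
have -> : `|wd * inner d b + wc * inner c b| ^+ 2 + `|wd * inner d a + wc * inner c a| ^+ 2
  = (`|inner d b| ^+ 2 + `|inner d a| ^+ 2) * `|wd| ^+ 2
    + (`|inner c b| ^+ 2 + `|inner c a| ^+ 2) * `|wc| ^+ 2
    + (G * wd * wc^* + (G * wd * wc^*)^*).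
  by rewrite /G !normCK !(rmorphD, rmorphM) /= !conjCK; ring.
by apply: hermitian2_le; rewrite addr_ge0 ?normsq_ge0.
Qed.

(* Bound for a 4-term combination, obtained by grouping it into two pairs. *)
Lemma gram4_le d c b a wd wc wb wa :
  sqnorm (fun j => (wd * d j + wc * c j) + (wb * b j + wa * a j)) <=
  lam (lam (sqnorm d) (sqnorm c) (inner d c)) (lam (sqnorm b) (sqnorm a) (inner b a))
      (sqrtC (lam (`|inner d b| ^+ 2 + `|inner d a| ^+ 2)
                  (`|inner c b| ^+ 2 + `|inner c a| ^+ 2)
                  (inner d b * (inner c b)^* + inner d a * (inner c a)^*)))
  * (`|wd| ^+ 2 + `|wc| ^+ 2 + (`|wb| ^+ 2 + `|wa| ^+ 2)).
Proof.
set T1 := `|wd| ^+ 2 + `|wc| ^+ 2; set T2 := `|wb| ^+ 2 + `|wa| ^+ 2.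
set mixed := lam (`|inner d b| ^+ 2 + _) _ _.
have T10 : 0 <= T1 by rewrite addr_ge0 ?normsq_ge0.
have T20 : 0 <= T2 by rewrite addr_ge0 ?normsq_ge0.
have mixed0 : 0 <= mixed by apply: lam_ge0; rewrite addr_ge0 ?normsq_ge0.
rewrite -[T1](sqrtCK T1) -[T2](sqrtCK T2).
apply: sqnorm_add_le; rewrite ?lam_ge0 ?sqnorm_ge0 ?sqrtC_ge0 ?sqrtCK //.
- exact: gram2_le.
- exact: gram2_le.
rewrite -(ler_pXn2r (_ : 0 < 2)%N) ?nnegrE ?normr_ge0 ?mulr_ge0 ?sqrtC_ge0 //.
by rewrite !exprMn !sqrtCK; apply: cross_inner_le.
Qed.

End Gram.

Section DeltaAsEigenvalue.
Context {C : numClosedFieldType}.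
Variables (n : nat) (a : nat -> C).
Local Notation b := (bcoef n a).
Local Notation c := (ccoef n a).
Local Notation d := (dcoef n a).

(* delta and delta2 are larger eigenvalues of the Gram matrix of (b, a) and of
   M M^*, M the matrix of inner products of (d, c) against (b, a); delta1 is
   such an eigenvalue for (d, c) by its very definition. *)
Lemma deltaE : delta n a = lam (sqnorm n b) (sqnorm n a) (inner n b a).
Proof. by rewrite -(lamC (sqnorm n a) _ (gamma n a)) // normrN. Qed.

Lemma delta2E : delta2 n a =
  lam (`|inner n d b| ^+ 2 + `|inner n d a| ^+ 2) (`|inner n c b| ^+ 2 + `|inner n c a| ^+ 2)
      (inner n d b * (inner n c b)^* + inner n d a * (inner n c a)^*).
Proof. by rewrite /delta2 /lam addrA. Qed.

Lemma boundE :
  (delta1 n a + delta n a + sqrtC ((delta1 n a - delta n a) ^+ 2 + 4 * delta2 n a)) / 2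
  = lam (delta1 n a) (delta n a) (sqrtC (delta2 n a)).
Proof.
have d2_ge0 : 0 <= delta2 n a by rewrite delta2E lam_ge0 ?addr_ge0 ?normsq_ge0.
by rewrite /lam ger0_norm ?sqrtC_ge0 // sqrtCK.
Qed.

End DeltaAsEigenvalue.

Section CompanionEigenvector.
Context {C : numClosedFieldType}.

Lemma sumj_rev n (F : nat -> C) : \sum_(k < n) F (n - k)%N = sumj n F.
Proof.
rewrite /sumj big_add1 /= big_nat_rev /= big_mkord.
by apply: eq_bigr => i _; congr F; have := ltn_ord i; lia.
Qed.

Variables (n' : nat) (a : nat -> C) (z : C).
Local Notation n := n'.+1.

Definition powcol : 'cV[C]_n := \col_(k < n) z ^+ (n - k.+1).

Lemma powcol_row0 (M : 'M[C]_n) :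
  (M *m powcol) ord0 ord0 = sumj n (fun j => ent M 0 (n - j) * z ^+ j.-1).
Proof.
rewrite mxE -sumj_rev; apply: eq_bigr => k _; rewrite mxE.
have hk : (n - (n - k) < n)%N by rewrite subKn ?ltn_ord // ltnW.
rewrite /ent (insubT (fun k => k < n)%N (ltn0Sn n')) (insubT (fun k => k < n)%N hk) /=.
congr (_ * z ^+ _); last by have := ltn_ord k; lia.
by congr (M _ _); apply: val_inj; rewrite /= subKn // ltnW.
Qed.

Hypothesis pz : peval n a z = 0.

Lemma peval_root : sumj n (fun j => a j * z ^+ j.-1) = - z ^+ n.
Proof. by apply/eqP; rewrite -addr_eq0 addrC; apply/eqP. Qed.

Lemma companion_eigen : companion n a *m powcol = z *: powcol.
Proof.
apply/matrixP => i j; rewrite !mxE.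
under eq_bigr => k _ do rewrite !mxE.
case: i => [[|i] hi] /=.
- under eq_bigr => k _ do rewrite mulNr.
  rewrite sumrN (eq_bigr (fun k : 'I_n => a (n - k)%N * z ^+ (n - k)%N.-1)); last first.
    by move=> k _; congr (_ * z ^+ _); lia.
  by rewrite (sumj_rev _ (fun j => a j * z ^+ j.-1)) peval_root opprK subn1 -exprS.
- rewrite (bigD1 (Ordinal (ltnW hi))) //= eqxx mul1r big1 ?addr0; last first.
    move=> k /negbTE k_neq; rewrite eqSS; case: eqP => [ik|_]; last by rewrite mul0r.
    by move: k_neq; rewrite (_ : k = Ordinal (ltnW hi)) ?eqxx //; apply: val_inj.
  by rewrite -exprS; congr (z ^+ _); lia.
Qed.

Lemma companion_pow_eigen m : companion n a ^+ m *m powcol = z ^+ m *: powcol.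
Proof.
elim: m => [|m IH]; first by rewrite expr0 scale1r mul1mx.
by rewrite exprS -mulmxE -mulmxA IH -scalemxAr companion_eigen scalerA -exprSr.
Qed.

Lemma first_row_eval m :
  sumj n (fun j => ent (companion n a ^+ m) 0 (n - j) * z ^+ j.-1) = z ^+ (m + n').
Proof.
by rewrite -powcol_row0 companion_pow_eigen !mxE subn1 exprD.
Qed.

End CompanionEigenvector.

Lemma geom_shift {C : numClosedFieldType} (y : C) k m : 0 <= y ->
  y ^+ k * \sum_(i < m) y ^+ i <= \sum_(i < k + m) y ^+ i.
Proof.
move=> y0; rewrite big_split_ord /= mulr_sumr.
under [X in _ <= _ + X]eq_bigr => i _ do rewrite exprD.
by rewrite lerDr sumr_ge0 // => i _; rewrite exprn_ge0.
Qed.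

Section RootBound.
Context {C : numClosedFieldType}.
Variables (n' : nat) (a : nat -> C) (z : C).
Local Notation n := n'.+1.
Hypothesis pz : peval n a z = 0.

Local Notation b := (bcoef n a).
Local Notation c := (ccoef n a).
Local Notation d := (dcoef n a).
Local Notation L := ((delta1 n a + delta n a
                      + sqrtC ((delta1 n a - delta n a) ^+ 2 + 4 * delta2 n a)) / 2).

(* Combination of the rows a, b, c, d whose pairing with (z^(j-1))_j is the
   sum S of the squared weights |z^(n+3)|^2, ..., |z^n|^2. *)
Definition rowcomb (j : nat) : C :=
  ((z ^+ (4 + n'))^* * d j + (z ^+ (3 + n'))^* * c j)
  + ((z ^+ (2 + n'))^* * b j + (- z ^+ n)^* * a j).
Definition wsum : C :=
  `|z ^+ (4 + n')| ^+ 2 + `|z ^+ (3 + n')| ^+ 2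
  + (`|z ^+ (2 + n')| ^+ 2 + `|- z ^+ n| ^+ 2).
Definition powers (j : nat) : C := (z ^+ j.-1)^*.

Lemma rowcomb_powers : inner n rowcomb powers = wsum.
Proof.
have -> : inner n rowcomb powers =
    (z ^+ (4 + n'))^* * sumj n (fun j => d j * z ^+ j.-1)
  + (z ^+ (3 + n'))^* * sumj n (fun j => c j * z ^+ j.-1)
  + ((z ^+ (2 + n'))^* * sumj n (fun j => b j * z ^+ j.-1)
  + (- z ^+ n)^* * sumj n (fun j => a j * z ^+ j.-1)).
  rewrite /inner /sumj !mulr_sumr -!big_split; apply: eq_bigr => j _ /=.
  by rewrite /rowcomb /powers conjCK; ring.
by rewrite !first_row_eval // peval_root // /wsum !normCKC.
Qed.

Lemma rowcomb_sqnorm : sqnorm n rowcomb <= L * wsum.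
Proof.
have := gram4_le n d c b a (z ^+ (4 + n'))^* (z ^+ (3 + n'))^* (z ^+ (2 + n'))^*
  (- z ^+ n)^*.
by rewrite !norm_conjC boundE deltaE delta2E.
Qed.

Lemma bound_ge0 : 0 <= L.
Proof.
rewrite boundE; apply: lam_ge0.
- exact: (lam_ge0 _ _ (gamma1 n a) (sqnorm_ge0 _ _) (sqnorm_ge0 _ _)).
- by rewrite deltaE; apply: lam_ge0; apply: sqnorm_ge0.
Qed.

(* Cauchy-Schwarz: wsum^2 <= |rowcomb|^2 |powers|^2 <= L wsum |powers|^2. *)
Lemma wsum_le : wsum <= L * sqnorm n powers.
Proof.
have S0 : 0 <= wsum by rewrite /wsum !addr_ge0 ?normsq_ge0.
have [->|S_neq0] := eqVneq wsum 0; first by rewrite mulr_ge0 ?bound_ge0 ?sqnorm_ge0.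
have S_gt0 : 0 < wsum by rewrite lt_def S_neq0 S0.
rewrite -(ler_pM2l S_gt0) mulrA [wsum * L]mulrC.
have := cauchy_schwarz n rowcomb powers.
rewrite rowcomb_powers (ger0_norm S0) => /le_trans; apply.
by rewrite ler_wpM2r ?sqnorm_ge0 ?rowcomb_sqnorm.
Qed.

Lemma normsqX k : `|z ^+ k| ^+ 2 = (`|z| ^+ 2) ^+ k.
Proof. by rewrite normrX exprAC. Qed.

Lemma sqnorm_powers : sqnorm n powers = \sum_(i < n) (`|z| ^+ 2) ^+ i.
Proof.
rewrite /sqnorm /sumj big_add1 /= big_mkord; apply: eq_bigr => i _.
by rewrite norm_conjC normsqX.
Qed.

Lemma powers_wsum : sqnorm n powers + wsum = \sum_(i < 4 + n) (`|z| ^+ 2) ^+ i.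
Proof.
rewrite sqnorm_powers (big_ord_recr n'.+4) /= (big_ord_recr n'.+3) /=.
rewrite (big_ord_recr n'.+2) /= (big_ord_recr n'.+1) /= /wsum normrN !normsqX.
by rewrite ![(_ + n')%N]addnC !addnS addn0; ring.
Qed.

(* |z|^8 N <= N + wsum <= (L + 1) N. *)
Lemma root_pow8_le : `|z| ^+ 8 <= L + 1.
Proof.
have N_gt0 : 0 < sqnorm n powers.
  rewrite sqnorm_powers big_ord_recl expr0; apply: lt_le_trans ltr01 _.
  by rewrite lerDl sumr_ge0 // => i _; rewrite exprn_ge0 ?normsq_ge0.
rewrite -(ler_pM2r N_gt0) mulrDl mul1r.
have -> : `|z| ^+ 8 = (`|z| ^+ 2) ^+ 4 by rewrite -exprM.
rewrite {1}sqnorm_powers; apply: le_trans (geom_shift _ 4 _ (normsq_ge0 z)) _.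
by rewrite -powers_wsum addrC lerD2r wsum_le.
Qed.

End RootBound.

Theorem mainTheorem14 (C : numClosedFieldType) (n : nat) (a : nat -> C) (z : C) :
  (2 <= n)%N -> a 1%N != 0 -> peval n a z = 0 ->
  `|z| <= 8.-root ((delta1 n a + delta n a
                    + sqrtC ((delta1 n a - delta n a) ^+ 2 + 4 * delta2 n a)) / 2 + 1).
Proof.
case: n a => [//|n'] a _ _ pz.
rewrite -(exprCK (isT : (0 < 8)%N) (normr_ge0 z)) ler_rootC ?nnegrE ?exprn_ge0 //.
- exact: root_pow8_le.
- by rewrite addr_ge0 ?ler01 ?bound_ge0.
Qed.
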